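(* Let $\mathbf{M}_\sigma\in\mathbb{R}^{n\times n}$ be symmetric positive semidefinite, $\mathbf{M}_\nu\in\mathbb{R}^{n\times n}$ symmetric positive definite, $\mathbf{C}\in\mathbb{R}^{n\times n}$ (discrete curl), $\mathbf{P}\in\mathbb{R}^{n\times k}$ (reduced projection of a tree-cotree gauge in the non-conducting region) and $\mathbf{X}_\mathrm{s}\in\mathbb{R}^{n\times n_\mathrm{s}}$ (discrete winding function). Set $\bar{\mathbf{M}}_\sigma=\mathbf{P}^\top\mathbf{M}_\sigma\mathbf{P}$, $\mathbf{K}_\nu=\mathbf{P}^\top\mathbf{C}^\top\mathbf{M}_\nu\mathbf{C}\mathbf{P}$, $\bar{\mathbf{X}}_\mathrm{s}=\mathbf{P}^\top\mathbf{X}_\mathrm{s}$, and assume that $\lambda\bar{\mathbf{M}}_\sigma+\mathbf{K}_\nu$ is positive definite for every $\lambda>0$, that $\bar{\mathbf{X}}_\mathrm{s}$ has full column rank, and that $\mathrm{im}\,\bar{\mathbf{X}}_\mathrm{s}\perp\mathrm{im}\,\bar{\mathbf{M}}_\sigma$. Then the gauged, spatially discretised A* system with circuit coupling \begin{align*} \bar{\mathbf{M}}_\sigma\tfrac{\mathrm{d}}{\mathrm{d}t}\mathbf{a}_\mathrm{red}+\mathbf{K}_\nu\mathbf{a}_\mathrm{red}-\bar{\mathbf{X}}_\mathrm{s}\mathbf{i}_\mathrm{s}&=0,\\ \tfrac{\mathrm{d}}{\mathrm{d}t}\bar{\mathbf{X}}_\mathrm{s}^\top\mathbf{a}_\mathrm{red}-\mathbf{v}_\mathrm{s}&=0,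 \end{align*} with $\mathbf{x}_\lambda=\mathbf{a}_\mathrm{red}$, $\mathbf{i}_\lambda=\mathbf{i}_\mathrm{s}$, $\mathbf{v}_\lambda=\mathbf{v}_\mathrm{s}$, is an inductance-like element.
   Context: Positive definite means $\mathbf{x}^\top\mathbf{M}\mathbf{x}>0$ for $\mathbf{x}\ne0$. Inductance-like element: a device described by a DAE $\mathbf{F}(\frac{\mathrm{d}}{\mathrm{d}t}\mathbf{x}_\lambda,\frac{\mathrm{d}}{\mathrm{d}t}\mathbf{i}_\lambda,\mathbf{x}_\lambda,\mathbf{i}_\lambda,\mathbf{v}_\lambda,t)=0$ with $\mathbf{x}_\lambda:\mathcal{I}\to\mathbb{R}^{n_\mathrm{dof}}$, $\mathbf{i}_\lambda,\mathbf{v}_\lambda:\mathcal{I}\to\mathbb{R}^{n_\lambda}$, such that at most one differentiation $\frac{\mathrm{d}}{\mathrm{d}t}\mathbf{F}=0$ is needed to obtain from $\mathbf{F}=0$ and $\frac{\mathrm{d}}{\mathrm{d}t}\mathbf{F}=0$ (by algebraic manipulations) a system $\frac{\mathrm{d}}{\mathrm{d}t}\mathbf{x}_\lambda=\mathbf{f}_\mathbf{x}(\mathbf{x}_\lambda,\mathbf{i}_\lambda,\mathbf{v}_\lambda,t)$, $\frac{\mathrm{d}}{\mathrm{d}t}\phi(\mathbf{i}_\lambda,\mathbf{x}_\lambda,t)=\mathbf{f}_\phi(\mathbf{x}_\lambda,\mathbf{i}_\lambda,\mathbf{v}_\lambda,t)$, where $\partial\phi/\partial\mathbf{i}_\lambda$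 is regular and $\frac{\partial}{\partial\mathbf{v}_\lambda}\Big((\frac{\partial\phi}{\partial\mathbf{i}_\lambda})^{-1}(-\frac{\partial\phi}{\partial\mathbf{x}_\lambda}\mathbf{f}_\mathbf{x}-\frac{\partial\phi}{\partial t}+\mathbf{f}_\phi)\Big)$ is positive definite. $\mathbf{a}_\mathrm{red}$ are the gauged degrees of freedom of the magnetic vector potential; $\mathbf{M}_\sigma,\mathbf{M}_\nu$ are the conductivity and reluctivity material matrices. *)

From mathcomp Require Import all_boot all_order all_algebra.
From mathcomp Require Import all_classical all_reals all_analysis.
Set Implicit Arguments. Unset Strict Implicit. Unset Printing Implicit Defensive.
Import Order.TTheory GRing.Theory Num.Theory.
Local Open Scope ring_scope.

Definition posdef (R : realType) (n : nat) (A : 'M[R]_n) : Prop :=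
  forall u : 'cV[R]_n, u != 0 -> 0 < (u^T *m A *m u) 0 0.

Definition possemidef (R : realType) (n : nat) (A : 'M[R]_n) : Prop :=
  forall u : 'cV[R]_n, 0 <= (u^T *m A *m u) 0 0.

Definition jacobian (R : realType) (m n : nat)
  (f : 'cV[R]_m -> 'cV[R]_n) (p : 'cV[R]_m) : 'M[R]_(n, m) :=
  \matrix_(r < n, c < m) ('d f (p : ('cV[R]_m : normedModType R)) (delta_mx c 0)) r 0.

(* Inductance-like element for a DAE
     F(d/dt x, d/dt i, x, i, v, t) = 0,
   x : R -> R^nd, i v : R -> R^nl, F valued in R^ne.
   "At most one differentiation and algebraic manipulations" is rendered
   as: at every time t0, for every (differentiable) trajectory at which
   F = 0 and d/dt F = 0 hold at t0, the explicit relations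
     d/dt x = fx(x,i,v,t),  d/dt phi(i,x,t) = fphi(x,i,v,t)
   hold at t0. *)
Definition inductance_like (R : realType) (nd nl ne : nat)
  (F : 'cV[R]_nd -> 'cV[R]_nl -> 'cV[R]_nd -> 'cV[R]_nl -> 'cV[R]_nl -> R ->
       'cV[R]_ne) : Prop :=
  exists (fx : 'cV[R]_nd -> 'cV[R]_nl -> 'cV[R]_nl -> R -> 'cV[R]_nd)
         (phi : 'cV[R]_nl -> 'cV[R]_nd -> R -> 'cV[R]_nl)
         (fphi : 'cV[R]_nd -> 'cV[R]_nl -> 'cV[R]_nl -> R -> 'cV[R]_nl),
  (forall i x t,
      differentiable (fun i' => phi i' x t) (i : ('cV[R]_nl : normedModType R)) /\
      differentiable (fun x' => phi i x' t) (x : ('cV[R]_nd : normedModType R)) /\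
      derivable (fun t' => phi i x t') t 1) /\
  (forall i x t, jacobian (fun i' => phi i' x t) i \in unitmx) /\
  (forall x i v t,
      let psi := fun v' : 'cV[R]_nl =>
        invmx (jacobian (fun i' => phi i' x t) i) *m
          (- (jacobian (fun x' => phi i x' t) x *m fx x i v' t)
           - derive1 (fun t' => phi i x t') t
           + fphi x i v' t) in
      differentiable psi (v : ('cV[R]_nl : normedModType R)) /\ posdef (jacobian psi v)) /\
  (forall (xs : R -> 'cV[R]_nd) (is_ vs : R -> 'cV[R]_nl) (t0 : R),
      (forall s, derivable xs s 1) -> (forall s, derivable is_ s 1) ->
      let G := fun s => F (derive1 xs s) (derive1 is_ s) (xs s) (is_ s) (vs s) s in
      G t0 = 0 -> derivable G t0 1 -> derive1 G t0 = 0 ->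
      derive1 xs t0 = fx (xs t0) (is_ t0) (vs t0) t0 /\
      derivable (fun s => phi (is_ s) (xs s) s) t0 1 /\
      derive1 (fun s => phi (is_ s) (xs s) s) t0 = fphi (xs t0) (is_ t0) (vs t0) t0).

(** Differentiating the first block row of the DAE once and multiplying it by
    [W = kermx Mbar], which kills the term [Mbar a''], yields
    [W (Knu a' - Xbar i') = 0].  Together with the undifferentiated equations
    [Mbar a' = Xbar i - Knu a] and [Xbar^T a' = v] this is a square linear
    system for [(a', i')], uniquely solvable because [Knu] is positive definite
    on [ker Mbar] and [Xbar] is injective with range in [ker Mbar].  Taking
    [phi] to be the identity in [i], the derivative of [i' = fphi] with respect
    to [v] is the lower right block [D] of the inverse system matrix, and if
    [(a', D w)] solves the system with right-hand side [(0, w)] then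
    [w^T D w = a'^T Knu a' > 0]. *)

From Pilot Require Import Defs.
From mathcomp Require Import all_boot all_order all_algebra.
From mathcomp Require Import all_classical all_reals all_analysis.
Import Order.TTheory GRing.Theory Num.Theory.
Import numFieldNormedType.Exports.
Local Open Scope ring_scope.

Section MatrixAlgebra.
Context {F : fieldType}.

Lemma inj_unitmx n (A : 'M[F]_n) :
  (forall u : 'cV[F]_n, A *m u = 0 -> u = 0) -> A \in unitmx.
Proof.
move=> A_inj; rewrite -unitmx_tr -row_free_unit -kermx_eq0.
apply/rowV0P => v /sub_kermxP vA0; apply: trmx_inj; rewrite trmx0.
by apply: A_inj; rewrite -[A]trmxK -trmx_mul vA0 trmx0.
Qed.

Lemma full_col_rank_inj {m n : nat} {A : 'M[F]_(m, n)} :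
  \rank A = n -> forall u : 'cV[F]_n, A *m u = 0 -> u = 0.
Proof.
move=> rankA u Au0; have freeAT : row_free A^T by rewrite /row_free mxrank_tr rankA.
apply: trmx_inj; apply: (row_free_inj freeAT).
by rewrite -trmx_mul Au0 !trmx0 mul0mx.
Qed.

Lemma bilinear_form_eq0 m n (B : 'M[F]_(m, n)) :
  (forall (u : 'cV[F]_m) (v : 'cV[F]_n), u^T *m B *m v = 0) -> B = 0.
Proof.
move=> B0; apply/matrixP => i j; have := B0 (delta_mx i 0) (delta_mx j 0).
by rewrite trmx_delta -rowE -colE => /matrixP/(_ 0 0); rewrite !mxE.
Qed.

Lemma dsubmx_mul_col m1 m2 n1 n2 (B : 'M[F]_(m1 + m2, n1 + n2))
    (r : 'cV[F]_n1) (v : 'cV[F]_n2) :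
  dsubmx (B *m col_mx r v) = drsubmx B *m v + dlsubmx B *m r.
Proof. by rewrite -[B in LHS]submxK mul_block_col col_mxKd addrC. Qed.

End MatrixAlgebra.

Section RealMatrices.
Context {R : realFieldType}.

Lemma dot_self_eq0 m (x : 'cV[R]_m) : x^T *m x = 0 -> x = 0.
Proof.
move/matrixP/(_ 0 0); rewrite !mxE => /eqP.
rewrite psumr_eq0 => [/allP x0|i _]; last by rewrite mxE -expr2 sqr_ge0.
apply/matrixP => i j; rewrite ord1 mxE.
by have := x0 i (mem_index_enum _); rewrite mxE -expr2 sqrf_eq0 => /eqP.
Qed.

Section SymmetricKernel.
Context {k : nat} {M : 'M[R]_k}.
Hypothesis MT : M^T = M.

Lemma kermx_sym_orth {y w : 'cV[R]_k} :
  M *m y = 0 -> kermx M *m w = 0 -> y^T *m w = 0.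
Proof.
move=> My0 Ww0; have : (y^T <= kermx M)%MS.
  by apply/sub_kermxP; rewrite -MT -trmx_mul My0 trmx0.
by case/submxP => z ->; rewrite -mulmxA Ww0 mulmx0.
Qed.

(* [im M] and [ker M = im (kermx M)^T] are orthogonal complements. *)
Lemma kermx_sym_split {y u : 'cV[R]_k} :
  M *m y + (kermx M)^T *m (kermx M *m u) = 0 -> M *m y = 0 /\ kermx M *m u = 0.
Proof.
move=> /eqP; rewrite addr_eq0 => /eqP My.
have My0 : M *m y = 0.
  have MWT : M *m (kermx M)^T = 0 by rewrite -{1}MT -trmx_mul mulmx_ker trmx0.
  apply: dot_self_eq0; rewrite {2}My mulmxN trmx_mul MT -mulmxA (mulmxA M).
  by rewrite MWT mul0mx mulmx0 oppr0.
split=> //; apply: dot_self_eq0.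
move: My; rewrite My0 => /esym/eqP; rewrite oppr_eq0 => /eqP WWu.
by rewrite trmx_mul -mulmxA WWu mulmx0.
Qed.

End SymmetricKernel.
End RealMatrices.

Section AffineMaps.
Context {R : numFieldType} {m p : nat} (A : 'M[R]_(p, m)) (c : 'cV[R]_p).

Lemma derive_affine (x v : 'cV[R]_m) : 'D_v (fun w => A *m w + c) x = A *m v.
Proof.
rewrite /derive; apply: cvg_lim => //; apply: cvg_near_cst.
near=> h; have h0 : h != 0 by near: h; exact: nbhs_dnbhs_neq.
by rewrite /= mulmxDr -scalemxAr -[X in X - _]addrA addrK scalerA mulVf // scale1r.
Unshelve. all: by end_near. Qed.

Lemma differentiable_affine (x : 'cV[R]_m) :
  differentiable (fun w : 'cV[R]_m => A *m w + c) x.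
Proof.
have -> : (fun w : 'cV[R]_m => A *m w + c) =
    \sum_(j < m) (fun w : 'cV[R]_m => w j 0 *: col j A) + cst c.
  apply/funext => w; rewrite /= fct_sumE; congr (_ + _).
  apply/matrixP => i l; rewrite !mxE summxE; apply: eq_bigr => j _.
  by rewrite !mxE ord1 mulrC.
apply: differentiableD; last exact: differentiable_cst.
apply: differentiable_sum => j; apply: differentiableZl.
exact: differentiable_coord.
Qed.

Lemma diff_affine (x v : 'cV[R]_m) : 'd (fun w : 'cV[R]_m => A *m w + c) x v = A *m v.
Proof. by rewrite -deriveE ?derive_affine //; exact: differentiable_affine. Qed.

End AffineMaps.

Section MatrixTimesCurve.
Context {R : numFieldType} {m p : nat} (A : 'M[R]_(p, m)) {f : R -> 'cV[R]_m}.

Let Af_comp : (fun s => A *m f s) = (fun w => A *m w + 0) \o f.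
Proof. by apply/funext => s /=; rewrite addr0. Qed.

Lemma derivable_mulmx {t : R} : derivable f t 1 -> derivable (fun s => A *m f s) t 1.
Proof.
move=> /derivable1_diffP df; apply/derivable1_diffP; rewrite Af_comp.
exact: differentiable_comp df (differentiable_affine _ _ _).
Qed.

Lemma derive1_mulmx {t : R} :
  derivable f t 1 -> derive1 (fun s => A *m f s) t = A *m derive1 f t.
Proof.
move=> /derivable1_diffP df; rewrite Af_comp derive1E'; last first.
  exact: differentiable_comp df (differentiable_affine _ _ _).
by rewrite diff_comp //; [rewrite /= diff_affine derive1E' | exact: differentiable_affine].
Qed.

End MatrixTimesCurve.

Section Jacobians.
Context {R : realType}.

Lemma jacobian_affine {m p : nat} (A : 'M[R]_(p, m)) (c : 'cV[R]_p) (x : 'cV[R]_m) :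
  Defs.jacobian (fun w : 'cV[R]_m => A *m w + c) x = A.
Proof. by apply/matrixP => i j; rewrite mxE diff_affine -colE mxE. Qed.

Lemma jacobian_id n (x : 'cV[R]_n) : Defs.jacobian (fun w : 'cV[R]_n => w) x = 1%:M.
Proof.
rewrite -(jacobian_affine 1%:M 0 x); congr Defs.jacobian.
by apply/funext => w; rewrite mul1mx addr0.
Qed.

Lemma jacobian_cst m n (c : 'cV[R]_n) (x : 'cV[R]_m) :
  Defs.jacobian (fun _ : 'cV[R]_m => c) x = 0.
Proof.
rewrite -(jacobian_affine 0 c x); congr Defs.jacobian.
by apply/funext => w; rewrite mul0mx add0r.
Qed.

End Jacobians.

(* [kermx M] annihilates the term [M a''] of the differentiated first row. *)
Lemma derive1_residual_kermx {R : realType} {k ns l : nat} (M K : 'M[R]_k)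
    (X : 'M[R]_(k, ns)) {a : R -> 'cV[R]_k} {i : R -> 'cV[R]_ns}
    {b : R -> 'cV[R]_l} {t : R} :
  derivable a t 1 -> derivable i t 1 ->
  let G := fun s => col_mx (M *m derive1 a s + K *m a s - X *m i s) (b s) in
  derivable G t 1 -> derive1 G t = 0 ->
  kermx M *m (K *m derive1 a t - X *m derive1 i t) = 0.
Proof.
move=> da di G dG DG; pose L := kermx M *m usubmx (1%:M : 'M[R]_(k + l)).
have LG : (fun s => L *m G s) =
    (fun s => (kermx M *m K) *m a s) - (fun s => (kermx M *m X) *m i s).
  apply/funext => s /=; rewrite /L /G -mulmxA mul_usub_mx mul1mx col_mxKu.
  by rewrite !mulmxDr mulmxN !mulmxA mulmx_ker mul0mx add0r.
have := derive1_mulmx L dG; rewrite DG mulmx0 LG derive1E deriveB; last 2 first.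
- exact: derivable_mulmx.
- exact: derivable_mulmx.
by rewrite -!derive1E !derive1_mulmx // mulmxBr !mulmxA.
Qed.

Lemma pencil_posdef_ker {R : realType} {k : nat} {M K : 'M[R]_k} :
  (forall lam : R, 0 < lam -> posdef (lam *: M + K)) ->
  forall y : 'cV[R]_k, M *m y = 0 -> y != 0 -> 0 < (y^T *m K *m y) 0 0.
Proof.
move=> pos_pencil y My0 /(pos_pencil 1 ltr01).
by rewrite scale1r mulmxDr mulmxDl -(mulmxA y^T M) My0 mulmx0 add0r.
Qed.

(* The rows are [M a' + W^T W (K a' - X i') = r] and [X^T a' = v]: the two
   equations [M a' = r] and [W (K a' - X i') = 0] merged into one by
   [kermx_sym_split]. *)
Definition reduced_mx {R : fieldType} {k ns : nat} (M K : 'M[R]_k)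
    (X : 'M[R]_(k, ns)) : 'M[R]_(k + ns) :=
  let Pi := (kermx M)^T *m kermx M in
  block_mx (M + Pi *m K) (- (Pi *m X)) X^T 0.

Section ReducedSystem.
Context {R : realType} {k ns : nat} {M K : 'M[R]_k} {X : 'M[R]_(k, ns)}.
Hypotheses (MT : M^T = M) (MX : M *m X = 0).
Hypothesis X_inj : forall j : 'cV[R]_ns, X *m j = 0 -> j = 0.
Hypothesis K_pos_ker : forall y : 'cV[R]_k, M *m y = 0 -> y != 0 -> 0 < (y^T *m K *m y) 0 0.

Local Notation W := (kermx M).
Local Notation S := (reduced_mx M K X).

Lemma reduced_mxE (y : 'cV[R]_k) (j : 'cV[R]_ns) :
  S *m col_mx y j = col_mx (M *m y + W^T *m (W *m (K *m y - X *m j))) (X^T *m y).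
Proof.
rewrite /reduced_mx mul_block_col mul0mx addr0 mulmxDl mulNmx -addrA.
by rewrite mulmxBr mulmxDr mulmxN !mulmxA.
Qed.

Lemma reduced_mx_ker (y : 'cV[R]_k) (j w : 'cV[R]_ns) :
  S *m col_mx y j = col_mx 0 w ->
  [/\ M *m y = 0, X^T *m y = w, W *m (X *m j) = W *m (K *m y)
    & y^T *m K *m y = w^T *m j].
Proof.
rewrite reduced_mxE => /eq_col_mx[/(kermx_sym_split MT)[My0 WKX] Xy].
have WXK : W *m (X *m j) = W *m (K *m y).
  by apply/eqP; rewrite eq_sym -subr_eq0 -mulmxBr WKX.
split=> //; rewrite -Xy trmx_mul trmxK -!mulmxA; apply/eqP.
by rewrite -subr_eq0 -mulmxBr (kermx_sym_orth MT My0 WKX).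
Qed.

Lemma reduced_mx_unit : S \in unitmx.
Proof.
apply: inj_unitmx => u; rewrite -[u]vsubmxK; set y := usubmx u; set j := dsubmx u.
rewrite -col_mx0 => /reduced_mx_ker[My0 _ WXK]; rewrite trmx0 mul0mx => yKy0.
have y0 : y = 0.
  by apply/eqP/negP => /negP/(K_pos_ker _ My0); rewrite yKy0 mxE ltxx.
have Xj0 : X *m j = 0.
  apply/dot_self_eq0/(kermx_sym_orth MT); first by rewrite mulmxA MX mul0mx.
  by rewrite WXK y0 !mulmx0.
by rewrite y0 (X_inj _ Xj0) col_mx0.
Qed.

Lemma reduced_mx_solve (y r : 'cV[R]_k) (j v : 'cV[R]_ns) :
  M *m y = r -> X^T *m y = v -> W *m (K *m y - X *m j) = 0 ->
  col_mx y j = invmx S *m col_mx r v.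
Proof.
move=> <- <- WKX; have := reduced_mxE y j; rewrite WKX mulmx0 addr0 => <-.
by rewrite mulKmx // reduced_mx_unit.
Qed.

Lemma posdef_reduced_schur : posdef (drsubmx (invmx S)).
Proof.
move=> w w0; set u := invmx S *m col_mx 0 w.
have Su : S *m u = col_mx 0 w by rewrite mulKVmx // reduced_mx_unit.
have uE : dsubmx u = drsubmx (invmx S) *m w by rewrite dsubmx_mul_col mulmx0 addr0.
rewrite -[u]vsubmxK in Su; case/reduced_mx_ker: Su => My0 Xy _ yKy.
rewrite -mulmxA -uE -yKy (K_pos_ker _ My0) //.
by apply: contraNneq w0 => y0; rewrite -Xy y0 mulmx0.
Qed.

Lemma reduced_mx_derivatives {a : R -> 'cV[R]_k} {i v : R -> 'cV[R]_ns} {t : R} :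
  derivable a t 1 -> derivable i t 1 ->
  let G := fun s => col_mx (M *m derive1 a s + K *m a s - X *m i s)
                           (X^T *m derive1 a s - v s) in
  G t = 0 -> derivable G t 1 -> derive1 G t = 0 ->
  col_mx (derive1 a t) (derive1 i t) = invmx S *m col_mx (X *m i t - K *m a t) (v t).
Proof.
move=> da di G G0 dG DG; move: G0; rewrite /G -col_mx0 => /eq_col_mx[eq_a eq_v].
apply: reduced_mx_solve (derive1_residual_kermx M K X da di dG DG); apply/eqP.
  by rewrite eq_sym subr_eq eq_sym -subr_eq0 eq_a.
by rewrite -subr_eq0 eq_v.
Qed.

End ReducedSystem.


Theorem proposition7 (R : realType) (n k ns : nat)
  (Msig Mnu C : 'M[R]_n) (P : 'M[R]_(n, k)) (Xs : 'M[R]_(n, ns)) :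
  Msig^T = Msig -> possemidef Msig ->
  Mnu^T = Mnu -> posdef Mnu ->
  let Mbar := P^T *m Msig *m P in
  let Knu := P^T *m C^T *m Mnu *m C *m P in
  let Xbar := P^T *m Xs in
  (forall lam : R, 0 < lam -> posdef (lam *: Mbar + Knu)) ->
  \rank Xbar = ns ->
  (forall (u : 'cV[R]_ns) (w : 'cV[R]_k), (Xbar *m u)^T *m (Mbar *m w) = 0) ->
  inductance_like
    (fun (da : 'cV[R]_k) (di : 'cV[R]_ns) (a : 'cV[R]_k) (i v : 'cV[R]_ns) (t : R) =>
       col_mx (Mbar *m da + Knu *m a - Xbar *m i) (Xbar^T *m da - v)).
Proof.
move=> MsigT _ _ _ Mbar Knu Xbar pos_pencil rankX orthXM.
have MbarT : Mbar^T = Mbar by rewrite /Mbar !trmx_mul trmxK MsigT mulmxA.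
have MX : Mbar *m Xbar = 0.
  apply: trmx_inj; rewrite trmx_mul MbarT trmx0; apply: bilinear_form_eq0 => u w.
  by have := orthXM u w; rewrite trmx_mul !mulmxA.
have Kpos := pencil_posdef_ker pos_pencil.
have Xinj := full_col_rank_inj rankX.
pose S := reduced_mx Mbar Knu Xbar.
pose sol (a : 'cV[R]_k) (i v : 'cV[R]_ns) := invmx S *m col_mx (Xbar *m i - Knu *m a) v.
exists (fun a i v _ => usubmx (sol a i v)), (fun i _ _ => i),
  (fun a i v _ => dsubmx (sol a i v)).
split; [|split; [|split]].
- by move=> i a t; split; [|split; [exact: differentiable_cst | exact: derivable_cst]].
- by move=> i a t; rewrite jacobian_id unitmx1.
- move=> a i v t /=; rewrite jacobian_id jacobian_cst derive1_cst invmx1.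
  set psi := (fun _ => _); have -> : psi = fun v' =>
      drsubmx (invmx S) *m v' + dlsubmx (invmx S) *m (Xbar *m i - Knu *m a).
    by apply/funext => v'; rewrite /psi mul1mx mul0mx oppr0 !add0r dsubmx_mul_col.
  split; first exact: differentiable_affine.
  by rewrite jacobian_affine; exact: posdef_reduced_schur MbarT MX Xinj Kpos.
move=> a i v t da di G G0 dG DG.
have sol_eq := reduced_mx_derivatives MbarT MX Xinj Kpos (da t) (di t) G0 dG DG.
by rewrite /sol /S -sol_eq col_mxKu col_mxKd; split; [|split; [exact: di|]].
Qed.
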